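(* Let $\mathcal{A}$ be an $[n_a,k_a]_q$ cyclic code and let $\mathcal{B}$ be an $[n_b,n_b-1]_q$ single parity check code (minimum distance $d_b=2$), with $\gcd(n_a,n_b)=1$. Let $\alpha$ be an element of order $n_a$ in $\mathbb{F}_{q^{s_a}}$, $\beta$ an element of order $n_b$ in $\mathbb{F}_{q^{s_b}}$, $s=\mathrm{lcm}(s_a,s_b)$, and let $f_1,f_2,m_1,m_2,\delta,\nu$ be integers with $m_1\neq0$, $m_2\neq0$, $\gcd(n_a,m_1)=\gcd(n_b,m_2)=1$, $\delta\ge 2$, $\nu>0$, such that $$\sum_{i=0}^{\infty} a(\alpha^{f_1+im_1+j})\, b(\beta^{f_2+im_2+j})X^i\equiv 0 \bmod X^{\delta-1}\quad\text{for all } j=0,\dots,\nu$$ holds for all $a(X)\in\mathcal{A}$, $b(X)\in\mathcal{B}$. Let $b(X)\in\mathcal{B}$ be a codeword of weight $2$. Let $r(X)=a(X)+e(X)$ with $a(X)\in\mathcal{A}$ and error $e(X)=\sum_{i\in\mathsf{E}}e_iX^i\in\mathbb{F}_q[X]$, where $\mathsf{E}=\{j_1,\dots,j_t\}\subseteq\{0,\dots,n_a-1\}$, $|\mathsf{E}|=t$, $e_i\neq 0$ for $i\in\mathsf{E}$, and $$t\leq \frac{\delta+\nu-1}{2d_b}=\frac{\delta+\nu-1}{4}.$$ For $j=0,\dots,\nu$ define the syndromes $S^{(j)}_i = e(\alpha^{f_1+im_1+j})\, b(\beta^{f_2+im_2+j})\in\mathbb{F}_{q^s}$ for $i=0,\dots,\delta-2$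 (equivalently, the coefficients of $\sum_{i\ge0} r(\alpha^{f_1+im_1+j})b(\beta^{f_2+im_2+j})X^i \bmod X^{\delta-1}$), let $\mathbf{S}^{(j)}$ be the $(\delta-1-2t)\times 2t$ matrix whose entry in row $u$ and column $v$ ($u=0,\dots,\delta-2-2t$, $v=0,\dots,2t-1$) is $S^{(j)}_{u+v}$, and let $\mathbf{S}$ be the matrix obtained by stacking $\mathbf{S}^{(0)},\mathbf{S}^{(1)},\dots,\mathbf{S}^{(\nu)}$ vertically. Then $\operatorname{rank}(\mathbf{S})=2t$.
   Context: A cyclic $[n,k]_q$ code is an ideal of $\mathbb{F}_q[X]/(X^n-1)$; codewords are identified with polynomials of degree less than $n$, and $c(\gamma)$ denotes evaluation at $\gamma$ in an extension field. A single parity check code of length $n_b$ is the code of all vectors in $\mathbb{F}_q^{n_b}$ whose coordinates sum to zero. The matrix $\mathbf{S}$ is the coefficient matrix of the joint key equations $\Omega^{(j)}(X)\equiv\Lambda(X)S^{(j)}(X)\bmod X^{\delta-1}$ for an error-locator polynomial $\Lambda$ of degree $2t$. *)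

From HB Require Import structures.
From mathcomp Require Import all_boot all_order all_algebra all_field.
Set Implicit Arguments. Unset Strict Implicit. Unset Printing Implicit Defensive.
Import GRing.Theory Num.Theory.
Local Open Scope ring_scope.

(* A cyclic code of length n over F: an ideal of F[X]/(X^n - 1), codewords
   identified with polynomials of degree < n (i.e. size <= n). *)
Definition cyclic_code (F : fieldType) (n : nat) (C : {pred {poly F}}) : Prop :=
  [/\ forall c, c \in C -> (size c <= n)%N,
      0 \in C,
      forall c d, c \in C -> d \in C -> c + d \in C,
      forall (k : F) c, c \in C -> k *: c \in C &
      forall c, c \in C -> ('X * c) %% ('X^n - 1) \in C].

Definition spc_code (F : fieldType) (n : nat) : {pred {poly F}} :=
  [pred b : {poly F} | (size b <= n)%N && (\sum_(i < n) b`_i == 0)].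

Definition weight (F : fieldType) (p : {poly F}) : nat :=
  count (fun c => c != 0) (polyseq p).

Definition peval (F : fieldType) (L : fieldExtType F) (p : {poly F}) (x : L) : L :=
  (map_poly (in_alg L) p).[x].

Definition syndrome (F : fieldType) (L : fieldExtType F) (a b : {poly F})
  (alpha beta : L) (f1 m1 f2 m2 : int) (j i : nat) : L :=
  peval a (alpha ^ (f1 + i%:Z * m1 + j%:Z)) *
  peval b (beta ^ (f2 + i%:Z * m2 + j%:Z)).

(* Row index k of S corresponds to j = k / (delta-1-2t), u = k mod (delta-1-2t). *)
Definition syndrome_matrix (F : fieldType) (L : fieldExtType F) (e b : {poly F})
  (alpha beta : L) (f1 m1 f2 m2 : int) (delta nu t : nat)
  : 'M[L]_(nu.+1 * (delta.-1 - 2 * t), 2 * t) :=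
  \matrix_(k, v) syndrome e b alpha beta f1 m1 f2 m2
     (k %/ (delta.-1 - 2 * t))%N ((k %% (delta.-1 - 2 * t)) + v)%N.

From HB Require Import structures.
From mathcomp Require Import all_boot all_order all_algebra all_field zify ring.
Set Implicit Arguments. Unset Strict Implicit. Unset Printing Implicit Defensive.
Import GRing.Theory Num.Theory.
Local Open Scope ring_scope.

(* Index by k < 2t the pairs (l, s) with e_l != 0 and b_s != 0 (b has weight
   2).  Every syndrome is then a power sum S^(j)_i = sum_k c_k g_k^i z_k^j with
   c_k != 0, z_k = alpha^l beta^s and g_k = (alpha^m1)^l (beta^m2)^s; since
   gcd(na, nb) = 1, both k |-> z_k and k |-> g_k are injective.  Hence
   S = U diag(c) V(g)^T with V(g) an invertible Vandermonde matrix, and the rows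
   of U are the monomial vectors z^j g^u, j <= nu, u < D := delta - 1 - 2t.
   A row space containing 1 that is not stable under multiplication by diag(z)
   (or diag(g)) gains a dimension from it, so these monomials span a space of
   dimension min(2t, nu + D) = 2t, the last step being 4t <= delta + nu - 1. *)

Section DiagonalStableRowSpaces.
Variables (L : fieldType) (N : nat).

Lemma Vandermonde_unitmx (h : 'I_N -> L) :
  injective h -> Vandermonde N (\row_k h k) \in unitmx.
Proof.
move=> h_inj; rewrite unitmxE det_Vandermonde unitfE.
apply/prodf_neq0 => i _; apply/prodf_neq0 => j lt_ij; rewrite !mxE subr_eq0.
by apply: contraTneq lt_ij => /h_inj ->; rewrite ltnn.
Qed.

Lemma diag_mx_stable_full (h : 'I_N -> L) m (W : 'M[L]_(m, N)) :
  injective h -> ((const_mx 1 : 'rV[L]_N) <= W)%MS ->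
  (W *m diag_mx (\row_k h k) <= W)%MS -> \rank W = N.
Proof.
move=> h_inj oneW stableW; apply/eqP; rewrite eqn_leq rank_leq_col /=.
have powW i : (\row_k h k ^+ i <= W)%MS.
  elim: i => [|i IHi].
    suff -> : \row_k h k ^+ 0 = const_mx 1 by [].
    by apply/rowP => k; rewrite !mxE.
  suff -> : \row_k h k ^+ i.+1 = \row_k h k ^+ i *m diag_mx (\row_k h k).
    exact: submx_trans (submxMr _ IHi) stableW.
  by apply/rowP => k; rewrite mul_mx_diag !mxE exprSr.
have VW : (Vandermonde N (\row_k h k) <= W)%MS.
  apply/row_subP => i.
  suff -> : row i (Vandermonde N (\row_k h k)) = \row_k h k ^+ i by [].
  by apply/rowP => k; rewrite !mxE.
by rewrite -{1}(mxrank_unit (Vandermonde_unitmx h_inj)) mxrankS.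
Qed.

Lemma mxrank_diag_mx_grow (h : 'I_N -> L) m m' (W : 'M[L]_(m, N))
    (W' : 'M[L]_(m', N)) :
  injective h -> ((const_mx 1 : 'rV[L]_N) <= W)%MS -> (W <= W')%MS ->
  (W *m diag_mx (\row_k h k) <= W')%MS -> (minn N (\rank W).+1 <= \rank W')%N.
Proof.
move=> h_inj oneW sWW' shiftW; have [sW'W | nsW'W] := boolP (W' <= W)%MS.
  have full_W := diag_mx_stable_full h_inj oneW (submx_trans shiftW sW'W).
  by have := mxrankS sWW'; rewrite full_W; apply: leq_trans (geq_minl _ _).
have : (W < W')%MS by rewrite ltmxE sWW'.
by rewrite ltmxErank => /andP[_]; apply: leq_trans (geq_minr _ _).
Qed.

End DiagonalStableRowSpaces.

Section MonomialRank.
Variables (L : fieldType) (N : nat) (z g : 'I_N -> L).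
Hypotheses (z_inj : injective z) (g_inj : injective g).

Definition monomial_row j u : 'rV[L]_N := \row_k (z k ^+ j * g k ^+ u).

Definition monomial_span a d : 'M[L]_N :=
  (\sum_(j < a.+1) \sum_(u < d.+1) <<monomial_row j u>>)%MS.

Lemma monomial_row_sub j u a d :
  (j <= a)%N -> (u <= d)%N -> (monomial_row j u <= monomial_span a d)%MS.
Proof.
move=> le_ja le_ud; apply: (sumsmx_sup (Ordinal (le_ja : j < a.+1)%N)) => //.
by apply: (sumsmx_sup (Ordinal (le_ud : u < d.+1)%N)); rewrite ?genmxE.
Qed.

Lemma monomial_span_mulmx_sub a d m (G : 'M[L]_N) (M : 'M[L]_(m, N)) :
  (forall j u, (j <= a)%N -> (u <= d)%N -> (monomial_row j u *m G <= M)%MS) ->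
  (monomial_span a d *m G <= M)%MS.
Proof.
move=> rowsM; rewrite sumsmxMr; apply/sumsmx_subP => j _.
rewrite sumsmxMr; apply/sumsmx_subP => u _.
by rewrite (eqmxMr _ (genmxE _)) rowsM // -ltnS.
Qed.

Lemma monomial_spanS a d a' d' :
  (a <= a')%N -> (d <= d')%N -> (monomial_span a d <= monomial_span a' d')%MS.
Proof.
move=> le_aa' le_dd'; rewrite -[monomial_span a d]mulmx1.
apply: monomial_span_mulmx_sub => j u le_ja le_ud; rewrite mulmx1.
exact: monomial_row_sub (leq_trans le_ja le_aa') (leq_trans le_ud le_dd').
Qed.

Lemma const1_monomial_span a d :
  ((const_mx 1 : 'rV[L]_N) <= monomial_span a d)%MS.
Proof.
suff <- : monomial_row 0 0 = const_mx 1 by apply: monomial_row_sub.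
by apply/rowP => k; rewrite !mxE !expr0 mulr1.
Qed.

Lemma monomial_span_mul_z a d :
  (monomial_span a d *m diag_mx (\row_k z k) <= monomial_span a.+1 d)%MS.
Proof.
apply: monomial_span_mulmx_sub => j u le_ja le_ud.
suff -> : monomial_row j u *m diag_mx (\row_k z k) = monomial_row j.+1 u.
  exact: monomial_row_sub.
by apply/rowP => k; rewrite mul_mx_diag !mxE exprSr mulrAC.
Qed.

Lemma monomial_span_mul_g a d :
  (monomial_span a d *m diag_mx (\row_k g k) <= monomial_span a d.+1)%MS.
Proof.
apply: monomial_span_mulmx_sub => j u le_ja le_ud.
suff -> : monomial_row j u *m diag_mx (\row_k g k) = monomial_row j u.+1.
  exact: monomial_row_sub.
by apply/rowP => k; rewrite mul_mx_diag !mxE exprSr mulrA.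
Qed.

Lemma monomial_span_rank a d :
  (0 < N)%N -> (minn N (a + d).+1 <= \rank (monomial_span a d))%N.
Proof.
move=> N_gt0; elim: d => [|d IHd]; first elim: a => [|a IHa].
- apply: leq_trans (geq_minr _ _) _; rewrite lt0n mxrank_eq0.
  apply/eqP => span0; have := const1_monomial_span 0 0.
  rewrite span0 submx0 => /eqP/rowP/(_ (Ordinal N_gt0))/eqP.
  by rewrite !mxE oner_eq0.
- have := mxrank_diag_mx_grow z_inj (const1_monomial_span a 0)
    (monomial_spanS (leqnSn a) (leqnn 0)) (monomial_span_mul_z a 0).
  by apply: leq_trans; move: IHa; rewrite !addn0; lia.
- have := mxrank_diag_mx_grow g_inj (const1_monomial_span a d)
    (monomial_spanS (leqnn a) (leqnSn d)) (monomial_span_mul_g a d).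
  by apply: leq_trans; move: IHd; lia.
Qed.

Definition monomial_mx nu D : 'M[L]_(nu.+1 * D, N) :=
  \matrix_(r, k) (z k ^+ (r %/ D) * g k ^+ (r %% D)).

Lemma monomial_mx_rank nu D :
  (0 < D)%N -> (N <= nu + D)%N -> \rank (monomial_mx nu D) = N.
Proof.
move=> D_gt0 le_N; apply/eqP; rewrite eqn_leq rank_leq_col /=.
have [N0 | N_gt0] := posnP N; first by rewrite {1}N0.
have span_sub : (monomial_span nu D.-1 <= monomial_mx nu D)%MS.
  rewrite -[monomial_span _ _]mulmx1.
  apply: monomial_span_mulmx_sub => j u le_jnu le_uD; rewrite mulmx1.
  have lt_r : (j * D + u < nu.+1 * D)%N by move: le_jnu le_uD D_gt0; nia.
  suff -> : monomial_row j u = row (Ordinal lt_r) (monomial_mx nu D).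
    exact: row_sub.
  have lt_uD : (u < D)%N by move: le_uD D_gt0; lia.
  apply/rowP => k; rewrite !mxE /= divnMDl // modnMDl.
  by rewrite divn_small // modn_small // addn0.
apply: leq_trans (mxrankS span_sub).
by apply: leq_trans (monomial_span_rank nu D.-1 N_gt0); move: le_N D_gt0; lia.
Qed.

Lemma rank_stacked_hankel nu D (c : 'I_N -> L) :
  (forall k, c k != 0) -> (0 < D)%N -> (N <= nu + D)%N ->
  \rank (\matrix_(r < nu.+1 * D, v < N)
           \sum_(k < N) c k * g k ^+ (r %% D + v) * z k ^+ (r %/ D)) = N.
Proof.
move=> c_neq0 D_gt0 le_N.
pose B := diag_mx (\row_k c k) *m (Vandermonde N (\row_k g k))^T.
have -> : \matrix_(r < nu.+1 * D, v < N)
    \sum_(k < N) c k * g k ^+ (r %% D + v) * z k ^+ (r %/ D)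
    = monomial_mx nu D *m B.
  apply/matrixP => r v; rewrite !mxE; apply: eq_bigr => k _.
  by rewrite /B mul_diag_mx !mxE exprD; ring.
have B_unit : B \in unitmx.
  rewrite unitmx_mul unitmx_tr Vandermonde_unitmx // andbT.
  by rewrite unitmxE det_diag unitfE; apply/prodf_neq0 => k _; rewrite mxE.
by rewrite mxrankMfree ?row_free_unit // monomial_mx_rank.
Qed.

End MonomialRank.

Definition poly_support (F : fieldType) n (p : {poly F}) : {set 'I_n} :=
  [set i : 'I_n | p`_i != 0].

Lemma card_poly_support (F : fieldType) n (p : {poly F}) :
  (size p <= n)%N -> #|poly_support n p| = weight p.
Proof.
move=> le_pn; rewrite /weight.
have -> : #|poly_support n p| = count (fun i : 'I_n => p`_i != 0) (enum 'I_n).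
  rewrite cardsE cardE /enum_mem size_filter.
  by rewrite (@eq_filter _ _ predT) ?filter_predT //; apply: eq_count.
rewrite -(count_map val (fun i => p`_i != 0)) val_enum_ord.
rewrite -(subnKC le_pn) iotaD count_cat add0n.
have -> : count (fun i => p`_i != 0) (iota (size p) (n - size p)) = 0%N.
  apply/eqP; rewrite -leqn0 leqNgt -has_count; apply/hasPn => i.
  by rewrite mem_iota => /andP[le_pi _]; rewrite nth_default ?eqxx.
by rewrite addn0 -(count_map (nth 0 p) (fun c => c != 0)) -/(mkseq _ _) mkseq_nth.
Qed.

Lemma peval_support_sum (F : fieldType) (L : fieldExtType F) n (p : {poly F})
    (x : L) :
  (size p <= n)%N -> peval p x = \sum_(i in poly_support n p) (p`_i)%:A * x ^+ i.
Proof.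
move=> le_pn; rewrite /peval (horner_coef_wide (n := n)) ?size_map_poly //.
rewrite (bigID (mem (poly_support n p))) /= [X in _ + X]big1 ?addr0.
  by apply: eq_bigr => i _; rewrite coef_map.
by move=> i; rewrite inE negbK coef_map /= => /eqP ->; rewrite scale0r mul0r.
Qed.

Lemma exprz_affine_exprn (L : fieldType) (x : L) (f m : int) (i j l : nat) :
  x != 0 ->
  (x ^ (f + i%:Z * m + j%:Z)) ^+ l =
  (x ^ f) ^+ l * ((x ^ m) ^+ l) ^+ i * (x ^+ l) ^+ j.
Proof.
move=> x_neq0; have x_unit : x \is a GRing.unit by rewrite unitfE.
rewrite !exprzDr // (mulrC i%:Z) -exprz_exp -!exprnP !exprMn -!exprM.
by rewrite (mulnC l i) (mulnC l j) !exprM.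
Qed.

Lemma prim_root_neq0 (L : fieldType) n (x : L) : n.-primitive_root x -> x != 0.
Proof.
by move=> x_prim; rewrite (prim_root_eq0 x_prim) -lt0n (prim_order_gt0 x_prim).
Qed.

Lemma prim_root_exprz_coprime (L : fieldType) n (x : L) (m : int) :
  n.-primitive_root x -> coprime n `|m|%N -> n.-primitive_root (x ^ m).
Proof.
move=> x_prim; have n_gt0 := prim_order_gt0 x_prim.
case: m => k /= co_nk; first by rewrite -exprnP prim_root_exp_coprime // coprime_sym.
have -> : x ^ Negz k = x ^+ (k.+1 * n.-1).
  rewrite NegzE -exprz_inv -exprnP exprVn; apply: mulr1_eq.
  rewrite -exprD addnC -mulnSr prednK // mulnC exprM.
  by rewrite (prim_expr_order x_prim) expr1n.
by rewrite prim_root_exp_coprime // coprimeMl coprime_sym co_nk coprimePn.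
Qed.

(* The power km * nb, where km * nb = 1 mod na, kills y and fixes x. *)
Lemma prim_root_mul_inj (L : fieldType) na nb (x y : L) :
  na.-primitive_root x -> nb.-primitive_root y -> coprime na nb ->
  injective (fun ls : 'I_na * 'I_nb => x ^+ ls.1 * y ^+ ls.2).
Proof.
move=> x_prim y_prim co_nab [l s] [l' s'] /= eq_xy.
have [km kn bezout _] := egcdnP na (prim_order_gt0 y_prim).
rewrite gcdnC (eqP co_nab) in bezout.
have xu : x ^+ (km * nb) = x.
  by rewrite -(prim_expr_mod x_prim) bezout modnMDl (prim_expr_mod x_prim) expr1.
have yu : y ^+ (km * nb) = 1 by rewrite mulnC exprM (prim_expr_order y_prim) expr1n.
have eq_x : x ^+ l = x ^+ l'.
  have := congr1 (fun w => w ^+ (km * nb)) eq_xy => /=.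
  by rewrite !exprMn ![(_ ^+ _) ^+ (km * nb)]exprAC xu yu !expr1n !mulr1.
have eq_y : y ^+ s = y ^+ s'.
  by apply: (mulfI (expf_neq0 l' (prim_root_neq0 x_prim))); rewrite -eq_xy eq_x.
congr (_, _); apply/val_inj/eqP.
  by move: (eq_prim_root_expr x_prim l l'); rewrite eq_x eqxx !modn_small // => <-.
by move: (eq_prim_root_expr y_prim s s'); rewrite eq_y eqxx !modn_small // => <-.
Qed.

Section SyndromePowerSum.
Variables (F : fieldType) (L : fieldExtType F) (na nb : nat) (alpha beta : L).
Variables (f1 m1 f2 m2 : int) (e b : {poly F}).
Hypotheses (alpha_neq0 : alpha != 0) (beta_neq0 : beta != 0).

Definition error_nodes : {set 'I_na * 'I_nb} :=
  setX (poly_support na e) (poly_support nb b).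

Definition node_locator (x : 'I_na * 'I_nb) : L := alpha ^+ x.1 * beta ^+ x.2.

Definition node_step (x : 'I_na * 'I_nb) : L :=
  (alpha ^ m1) ^+ x.1 * (beta ^ m2) ^+ x.2.

Definition node_value (x : 'I_na * 'I_nb) : L :=
  (e`_x.1)%:A * (b`_x.2)%:A * (alpha ^ f1) ^+ x.1 * (beta ^ f2) ^+ x.2.

Lemma syndrome_power_sum j i :
  (size e <= na)%N -> (size b <= nb)%N ->
  syndrome e b alpha beta f1 m1 f2 m2 j i =
  \sum_(x in error_nodes) node_value x * node_step x ^+ i * node_locator x ^+ j.
Proof.
move=> le_ena le_bnb.
rewrite /syndrome !(peval_support_sum _ le_ena, peval_support_sum _ le_bnb).
rewrite big_distrl /=; under eq_bigr do rewrite big_distrr /=.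
rewrite pair_big_dep; apply: eq_big => [[l s] | [l s] _]; first by rewrite in_setX.
rewrite /node_value /node_step /node_locator /=.
by rewrite !exprz_affine_exprn // !exprMn; ring.
Qed.

Lemma node_value_neq0 x : x \in error_nodes -> node_value x != 0.
Proof.
case: x => l s; rewrite in_setX !inE /= => /andP[el_neq0 bs_neq0].
by rewrite !mulf_neq0 ?expf_neq0 ?expfz_neq0 // scaler_eq0 negb_or oner_eq0 andbT.
Qed.

End SyndromePowerSum.

Theorem theorem7 (F : finFieldType) (L : fieldExtType F)
  (na nb : nat) (A : {pred {poly F}}) (alpha beta : L)
  (f1 f2 m1 m2 : int) (delta nu : nat)
  (b a e r : {poly F}) (E : {set 'I_na}) :
  cyclic_code na A ->
  coprime na nb ->
  na.-primitive_root alpha -> nb.-primitive_root beta ->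
  m1 != 0 -> m2 != 0 ->
  coprime na `|m1|%N -> coprime nb `|m2|%N ->
  (2 <= delta)%N -> (0 < nu)%N ->
  (forall a' b', a' \in A -> b' \in @spc_code F nb ->
     forall j i, (j <= nu)%N -> (i < delta.-1)%N ->
       syndrome a' b' alpha beta f1 m1 f2 m2 j i = 0) ->
  b \in @spc_code F nb -> weight b = 2%N ->
  a \in A -> r = a + e ->
  (size e <= na)%N ->
  (forall i : 'I_na, (i \in E) = (e`_i != 0)) ->
  (4 * #|E| <= delta + nu - 1)%N ->
  (2 * #|E| < delta.-1)%N ->
  \rank (syndrome_matrix e b alpha beta f1 m1 f2 m2 delta nu #|E|) = (2 * #|E|)%N.
Proof.
move=> _ co_nab alpha_prim beta_prim _ _ co_m1 co_m2 _ _ _ b_spc b_wt _ _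
       le_ena E_supp le_4t lt_2t.
have le_bnb : (size b <= nb)%N by case/andP: b_spc.
have alpha_neq0 := prim_root_neq0 alpha_prim.
have beta_neq0 := prim_root_neq0 beta_prim.
have E_eq : E = poly_support na e by apply/setP => i; rewrite inE E_supp.
have card_nodes : (2 * #|E| = #|error_nodes na nb e b|)%N.
  by rewrite cardsX E_eq (card_poly_support (n := nb)) // b_wt mulnC.
pose node k := enum_val (cast_ord card_nodes k).
have node_inj : injective node by move=> k k' /enum_val_inj/cast_ord_inj.
set D := (delta.-1 - 2 * #|E|)%N.
have -> : syndrome_matrix e b alpha beta f1 m1 f2 m2 delta nu #|E| =
    \matrix_(q < nu.+1 * D, v < 2 * #|E|) \sum_(k < 2 * #|E|)
      node_value alpha beta f1 f2 e b (node k) *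
      node_step alpha beta m1 m2 (node k) ^+ (q %% D + v) *
      node_locator alpha beta (node k) ^+ (q %/ D).
  apply/matrixP => q v.
  rewrite !mxE (syndrome_power_sum (na := na) (nb := nb)) // big_enum_val.
  rewrite (reindex (cast_ord card_nodes)) //.
  by exists (cast_ord (esym card_nodes)) => k _; rewrite ?cast_ordK ?cast_ordKV.
apply: rank_stacked_hankel.
- exact: inj_comp (prim_root_mul_inj alpha_prim beta_prim co_nab) node_inj.
- apply: inj_comp node_inj; apply: prim_root_mul_inj co_nab.
    exact: prim_root_exprz_coprime.
  exact: prim_root_exprz_coprime.
- by move=> k; rewrite node_value_neq0 ?enum_valP.
- by move: lt_2t; lia.
- by move: lt_2t le_4t; lia.
Qed.
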